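(* Let $N$ be a finite-dimensional Hilbert space and let $S$ be the operator in $\ell_2(\mathbb{Z},N)$ defined below. A fundamental symmetry $J$ in $\ell_2(\mathbb{Z},N)$ commutes with $S$ if and only if there exist fundamental symmetries $J_-$, $J_+$ in $N$ such that for every $(x_k)_{k\in\mathbb{Z}}\in\ell_2(\mathbb{Z},N)$, $(J(x_k))_k=J_-x_k$ for $k\le 0$ and $(J(x_k))_k=J_+x_k$ for $k\ge 1$.
   Context: Let $A$ be the operator in $\ell_2(\mathbb{Z},N)$ with domain $\mathcal{D}(A)$ consisting of all sequences $f=(f_k)_{k\in\mathbb{Z}}$ of the form $f_k=x_{k-1}-x_k$ with $(x_k)\in\ell_2(\mathbb{Z},N)$, acting by $(Af)_k=i(x_{k-1}+x_k)$. Let $S$ be the restriction of $A$ to the set of those $f\in\mathcal{D}(A)$ for which $x_0=0$. A fundamental symmetry is a bounded operator $J$ with $J=J^*$, $J^2=I$. ''$J$ commutes with $S$'' means $J\mathcal{D}(S)\subset\mathcal{D}(S)$ and $JSu=SJu$ for all $u\in\mathcal{D}(S)$. *)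

From HB Require Import structures.
From mathcomp Require Import all_boot all_order all_algebra.
From mathcomp Require Import all_classical all_reals all_analysis.
From mathcomp Require Import complex.
Set Implicit Arguments. Unset Strict Implicit. Unset Printing Implicit Defensive.
Import Order.TTheory GRing.Theory Num.Theory numFieldNormedType.Exports.
Local Open Scope ring_scope.

(* The finite-dimensional complex Hilbert space N is modelled as the
   column vectors 'cV[R[i]]_n with the standard inner product
   <u, v> = \sum_i u_i * conj(v_i). *)

Section L2.
Variables (R : realType) (n : nat).
Local Notation C := R[i].
Local Notation V := 'cV[C]_n.
Local Notation seqN := (int -> V).

Definition vnorm2 (v : V) : R :=
  \sum_(j < n) (complex.Re (v j 0) ^+ 2 + complex.Im (v j 0) ^+ 2).

Definition vdot (u v : V) : C := \sum_(j < n) u j 0 * conjc (v j 0).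

(* symmetric partial sums over k = -K .. K *)
Definition psum (T : nmodType) (a : int -> T) (K : nat) : T :=
  \sum_(0 <= k < K.*2.+1) a (k%:Z - K%:Z).

(* membership in l_2(Z, N): the nonnegative series \sum_k ||x_k||^2 converges *)
Definition l2 (x : seqN) : Prop :=
  exists M : R, forall K : nat, psum (fun k => vnorm2 (x k)) K <= M.

(* inner product in l_2(Z, N) (as limit of the symmetric partial sums,
   which converge absolutely for x, y in l_2) *)
Definition l2inner (x y : seqN) : C :=
  Complex (limn (fun K : nat => (complex.Re (psum (fun k => vdot (x k) (y k)) K) : R)))
          (limn (fun K : nat => (complex.Im (psum (fun k => vdot (x k) (y k)) K) : R))).

Definition l2_bounded_linear (J : seqN -> seqN) : Prop :=
  [/\ forall f, l2 f -> l2 (J f),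
      forall (a : C) f g, l2 f -> l2 g ->
        J (fun k => a *: f k + g k) = (fun k => a *: J f k + J g k)
    & exists c : R, forall f (M : R), l2 f ->
        (forall K, psum (fun k => vnorm2 (f k)) K <= M) ->
        forall K, psum (fun k => vnorm2 (J f k)) K <= c * M].

Definition l2_fund_sym (J : seqN -> seqN) : Prop :=
  [/\ l2_bounded_linear J,
      forall f g, l2 f -> l2 g -> l2inner (J f) g = l2inner f (J g)
    & forall f, l2 f -> J (J f) = f].

Definition fund_sym (J : 'M[C]_n) : Prop :=
  (map_mx conjc J)^T = J /\ J *m J = 1%:M.

(* A : f = (x_{k-1} - x_k)_k  |->  (i (x_{k-1} + x_k))_k *)
Definition Adom_of (x : seqN) : seqN := fun k => x (k - 1) - x k.
Definition Aval_of (x : seqN) : seqN := fun k => 'i *: (x (k - 1) + x k).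

Definition S_graph (f g : seqN) : Prop :=
  exists x : seqN, [/\ l2 x, x 0 = 0, f = Adom_of x & g = Aval_of x].

Definition in_domS (f : seqN) : Prop := exists g, S_graph f g.

(* J commutes with S: J D(S) ⊂ D(S) and J S u = S J u for u in D(S) *)
Definition commutes_with_S (J : seqN -> seqN) : Prop :=
  forall f g, S_graph f g -> exists g', S_graph (J f) g' /\ J g = g'.

End L2.

From mathcomp Require Import all_boot all_order all_algebra.
From mathcomp Require Import all_classical all_reals all_analysis.
From mathcomp Require Import complex.
From mathcomp Require Import zify ring lra.
Import Order.TTheory GRing.Theory Num.Theory numFieldNormedType.Exports.
Set Implicit Arguments. Unset Strict Implicit. Unset Printing Implicit Defensive.
Local Open Scope ring_scope.

(* Let x be in l_2 with x_0 = 0.  Both x and its shift (x_(k-1))_k are linear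
   combinations of Adom_of x and Aval_of x, which lie on the graph of S; if J
   commutes with S, it maps them to Adom_of y and Aval_of y for some y with
   y_0 = 0, whence J x = y.  So J preserves vanishing at 0 and commutes with the
   shift on such sequences, and then also preserves vanishing at 1.
   Self-adjointness turns these into: J maps sequences supported at 0 (resp. 1)
   to sequences supported there, which defines J_- (resp. J_+); the shift
   carries J_- to every k <= 0 and J_+ to every k >= 1, and boundedness extends
   the formula from finitely supported sequences to all of l_2.  Conversely, a
   block operator with its break between 0 and 1 commutes with S because the
   constraint x_0 = 0 removes the only term coupling the two halves. *)

Section PartialSums.
Variable T : nmodType.
Implicit Types a b : int -> T.

Lemma psum0 a : psum a 0 = a 0.
Proof. by rewrite /psum big_nat1. Qed.

Lemma psumS a K : psum a K.+1 = psum a K + a K.+1%:Z + a (- K.+1%:Z).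
Proof.
rewrite /psum doubleS big_nat_recr //= big_nat_recl //=.
have -> : \sum_(0 <= i < K.*2.+1) a (i.+1%:Z - K.+1%:Z)
        = \sum_(0 <= i < K.*2.+1) a (i%:Z - K%:Z).
  by apply: eq_bigr => i _; congr a; lia.
have -> : 0%:Z - K.+1%:Z = - K.+1%:Z by lia.
have -> : (K.*2.+2)%:Z - K.+1%:Z = K.+1%:Z by lia.
by rewrite [in RHS]addrAC [a (- _) + _]addrC.
Qed.

Lemma psumD a b K : psum (fun k => a k + b k) K = psum a K + psum b K.
Proof. exact: big_split. Qed.

Lemma eq_psum a b K : a =1 b -> psum a K = psum b K.
Proof. by move=> eq_ab; apply: eq_bigr => i _. Qed.

Lemma psum_supp1 a j K : (forall k, k != j -> a k = 0) ->
  psum a K = if (`|j| <= K)%N then a j else 0.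
Proof.
move=> a0; elim: K => [|K IH].
  rewrite psum0; have [->//|j0] := eqVneq j 0.
  by rewrite a0 1?eq_sym // leqn0 absz_eq0 (negPf j0).
rewrite psumS IH.
have [jK|jK] := eqVneq j K.+1%:Z.
  subst j;   rewrite (a0 (- K.+1%:Z)); last by lia.
  rewrite (_ : (`|K.+1%:Z| <= K)%N = false); last by lia.
  by rewrite (_ : (`|K.+1%:Z| <= K.+1)%N) ?add0r ?addr0 //; lia.
have [jNK|jNK] := eqVneq j (- K.+1%:Z).
  subst j;   rewrite (a0 K.+1%:Z); last by lia.
  rewrite (_ : (`|- K.+1%:Z| <= K)%N = false); last by lia.
  by rewrite (_ : (`|- K.+1%:Z| <= K.+1)%N) ?add0r //; lia.
rewrite (a0 K.+1%:Z) 1?eq_sym // (a0 (- K.+1%:Z)) 1?eq_sym // !addr0.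
by congr (if _ then _ else _); lia.
Qed.

Lemma psum_shift b K : psum (fun k => b (k - 1)) K + b K%:Z + b K.+1%:Z = psum b K.+1.
Proof.
elim: K => [|K IH].
  rewrite !psumS !psum0 (_ : 0 - 1 = - 1%:Z) //.
  by rewrite [in RHS]addrAC -addrA [b 0 + _]addrC addrA.
rewrite psumS (psumS b K.+1) -IH.
rewrite (_ : K.+1%:Z - 1 = K%:Z); last by lia.
rewrite (_ : - K.+1%:Z - 1 = - K.+2%:Z); last by lia.
rewrite -!addrA; congr (_ + _); rewrite !addrA [in RHS]addrC !addrA.
by congr (_ + _); rewrite [b K + _]addrC.
Qed.

Lemma psum_reflect b K : psum (fun k => b (- k)) K = psum b K.
Proof.
elim: K => [|K IH]; first by rewrite !psum0 oppr0.
by rewrite !psumS IH opprK addrAC.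
Qed.

End PartialSums.

Lemma psum_trunc (T : zmodType) (b : int -> T) (K L : nat) :
  psum (fun k => if (`|k| <= K)%N then 0 else b k) L = psum b L - psum b (minn L K).
Proof.
elim: L => [|L IH]; first by rewrite !psum0 min0n psum0 subrr.
rewrite psumS IH abszN /=.
have [LK|KL] := leqP L.+1 K.
  by rewrite (minn_idPl (ltnW LK)) !subrr !addr0.
rewrite (minn_idPr (KL : K <= L)%N) psumS.
by rewrite [_ - _ + _]addrAC [LHS]addrAC.
Qed.

Section RealPartialSums.
Variable R : numDomainType.
Implicit Types a b : int -> R.

Lemma ler_psum a b K : (forall k, a k <= b k) -> psum a K <= psum b K.
Proof. by move=> le_ab; apply: ler_sum => i _. Qed.

Lemma psum_nondecr a : (forall k, 0 <= a k) ->
  {homo psum a : K L / (K <= L)%N >-> K <= L}.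
Proof.
move=> a_ge0 K; elim=> [|L IH]; first by rewrite leqn0 => /eqP ->.
rewrite leq_eqVlt => /orP [/eqP -> //|/IH le_KL].
by rewrite psumS (le_trans le_KL) // -addrA lerDl addr_ge0.
Qed.

Lemma ler_psum_term a j K : (forall k, 0 <= a k) -> (`|j| <= K)%N -> a j <= psum a K.
Proof.
move=> a_ge0 jK.
have -> : a j = psum (fun k => if k == j then a j else 0) K.
  by rewrite (psum_supp1 (j := j)) ?eqxx ?jK // => k /negPf ->.
by apply: ler_psum => k; case: eqP => [->|]; rewrite ?a_ge0.
Qed.

End RealPartialSums.

Section ColumnVectors.
Variables (R : realType) (n : nat).
Local Notation C := R[i].
Local Notation V := 'cV[C]_n.
Implicit Types (c x : C) (u v w : V).

Lemma sqr_Re_Im_ge0 x : 0 <= complex.Re x ^+ 2 + complex.Im x ^+ 2.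
Proof. by rewrite addr_ge0 ?sqr_ge0. Qed.

Lemma sqr_Re_Im_eq0 x : complex.Re x ^+ 2 + complex.Im x ^+ 2 = 0 -> x = 0.
Proof.
case: x => a b /= ab0.
have -> : a = 0 by apply/eqP; rewrite -sqrf_eq0; apply/eqP; nra.
by have -> : b = 0 by apply/eqP; rewrite -sqrf_eq0; apply/eqP; nra.
Qed.

Lemma vnorm2_ge0 v : 0 <= vnorm2 v.
Proof. by apply: sumr_ge0 => j _; apply: sqr_Re_Im_ge0. Qed.

Lemma vnorm20 : vnorm2 (0 : V) = 0.
Proof. by rewrite /vnorm2 big1 // => j _; rewrite mxE expr0n addr0. Qed.

Lemma vnorm2_le0 v : vnorm2 v <= 0 -> v = 0.
Proof.
move=> v_le0; have /eqP : vnorm2 v = 0 by apply/eqP; rewrite eq_le v_le0 vnorm2_ge0.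
rewrite psumr_eq0 => [/allP v0|j _]; last exact: sqr_Re_Im_ge0.
apply/matrixP => i j; rewrite (ord1 j) mxE.
by apply: sqr_Re_Im_eq0; apply/eqP/v0; rewrite mem_index_enum.
Qed.

Lemma vnorm2D_le u v : vnorm2 (u + v) <= 2 * vnorm2 u + 2 * vnorm2 v.
Proof.
rewrite /vnorm2 !mulr_sumr -big_split; apply: ler_sum => j _ /=.
rewrite mxE (raddfD (@complex.Re R : Rcomplex R -> R)).
rewrite (raddfD (@complex.Im R : Rcomplex R -> R)) /=.
have := sqr_ge0 (complex.Re (u j 0) - complex.Re (v j 0)).
have := sqr_ge0 (complex.Im (u j 0) - complex.Im (v j 0)).
lra.
Qed.

Lemma vnorm2Z c v :
  vnorm2 (c *: v) = (complex.Re c ^+ 2 + complex.Im c ^+ 2) * vnorm2 v.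
Proof.
rewrite /vnorm2 mulr_sumr; apply: eq_bigr => j _; rewrite mxE.
by case: c => a b; case: (v j 0) => c d /=; ring.
Qed.

Lemma Re_vdotvv u : complex.Re (vdot u u) = vnorm2 u.
Proof.
rewrite /vdot (raddf_sum (@complex.Re R : Rcomplex R -> R)).
by apply: eq_bigr => j _; case: (u j 0) => a b /=; ring.
Qed.

Lemma vdot0l w : vdot 0 w = 0.
Proof. by rewrite /vdot big1 // => j _; rewrite mxE mul0r. Qed.

Lemma vdot0r w : vdot w 0 = 0.
Proof. by rewrite /vdot big1 // => j _; rewrite mxE (raddf0 conjc) mulr0. Qed.

Lemma vdot_delta_r u (b : 'I_n) : vdot u (delta_mx b 0) = u b 0.
Proof.
rewrite /vdot (bigD1 b) //= big1 ?addr0 => [|j /negPf jb]; rewrite mxE.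
  by rewrite !eqxx /= oppr0 mulr1.
by rewrite jb /= oppr0 mulr0.
Qed.

Lemma vdot_delta_l u (b : 'I_n) : vdot (delta_mx b 0) u = conjc (u b 0).
Proof.
rewrite /vdot (bigD1 b) //= big1 ?addr0 => [|j /negPf jb]; rewrite mxE.
  by rewrite !eqxx mul1r.
by rewrite jb mul0r.
Qed.

End ColumnVectors.

Section MatrixOfLinearMap.
Variables (R : comNzRingType) (m n : nat).

Definition colmx_of (L : 'cV[R]_n -> 'cV[R]_m) : 'M[R]_(m, n) :=
  \matrix_(i, j) L (delta_mx j 0) i 0.

Lemma colmx_ofE (L : 'cV[R]_n -> 'cV[R]_m) :
  (forall a u w, L (a *: u + w) = a *: L u + L w) ->
  forall v, L v = colmx_of L *m v.
Proof.
move=> L_lin.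
have L0 : L 0 = 0.
  have := L_lin 1 0 0; rewrite !scale1r addr0 => /(congr1 (fun x => x - L 0)).
  by rewrite subrr addrK.
have L_sum (r : seq 'I_n) (F : 'I_n -> R) :
    L (\sum_(j <- r) F j *: delta_mx j 0) = \sum_(j <- r) F j *: L (delta_mx j 0).
  by elim: r => [|j r IH]; rewrite ?big_nil // !big_cons L_lin IH.
move=> v; rewrite {1}(matrix_sum_delta v).
under eq_bigr => i _ do rewrite big_ord1.
rewrite L_sum; apply/matrixP => i k; rewrite (ord1 k) !mxE summxE.
by apply: eq_bigr => j _; rewrite !mxE mulrC.
Qed.

Lemma colmx_delta_entry (M : 'M[R]_(m, n)) i j : (M *m (delta_mx j 0 : 'cV_n)) i 0 = M i j.
Proof. by rewrite -colE mxE. Qed.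

End MatrixOfLinearMap.

Section SquareSummable.
Variables (R : realType) (n : nat).
Local Notation C := R[i].
Local Notation V := 'cV[C]_n.
Implicit Types x y f g : int -> V.

Definition single (j : int) (v : V) : int -> V := fun k => if k == j then v else 0.

Definition trunc (K : nat) x : int -> V := fun k => if (`|k| <= K)%N then x k else 0.

Lemma l2_0 : l2 (fun _ => 0 : V).
Proof. by exists 0 => K; rewrite /psum big1 // => k _; exact: vnorm20. Qed.

Lemma l2_lincomb (a : C) f g : l2 f -> l2 g -> l2 (fun k => a *: f k + g k).
Proof.
move=> [Mf le_f] [Mg le_g]; set c := complex.Re a ^+ 2 + complex.Im a ^+ 2.
have c_ge0 : 0 <= c by apply: sqr_Re_Im_ge0.
exists (2 * c * Mf + 2 * Mg) => K.
apply: le_trans (_ : psum (fun k => 2 * c * vnorm2 (f k) + 2 * vnorm2 (g k)) K <= _).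
  by apply: ler_psum => k; rewrite -mulrA -vnorm2Z vnorm2D_le.
by rewrite psumD /psum -!mulr_sumr lerD ?ler_wpM2l ?mulr_ge0 ?(le_f K) ?(le_g K).
Qed.

Lemma l2_add f g : l2 f -> l2 g -> l2 (fun k => f k + g k).
Proof.
move=> l2f l2g; have := l2_lincomb 1 l2f l2g.
by under eq_fun => k do rewrite scale1r.
Qed.

Lemma l2_single j v : l2 (single j v).
Proof.
exists (vnorm2 v) => K.
rewrite (psum_supp1 (j := j)) => [|k /negPf kj]; last by rewrite /single kj vnorm20.
by rewrite /single eqxx; case: ifP; rewrite ?vnorm2_ge0.
Qed.

Lemma l2_shift x : l2 x -> l2 (fun k => x (k - 1)).
Proof.
move=> [M le_x]; exists M => K; apply: le_trans (le_x K.+1).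
rewrite -(psum_shift (fun k => vnorm2 (x k))) -addrA lerDl.
by rewrite addr_ge0 ?vnorm2_ge0.
Qed.

Lemma l2_reflect x : l2 x -> l2 (fun k => x (- k)).
Proof.
by move=> [M le_x]; exists M => K; rewrite (psum_reflect (fun k => vnorm2 (x k))).
Qed.

Lemma l2_shiftN x : l2 x -> l2 (fun k => x (k + 1)).
Proof.
move=> /l2_reflect /l2_shift /l2_reflect.
by under eq_fun => k do rewrite opprB addrC opprK.
Qed.

Lemma l2_Adom x : l2 x -> l2 (Adom_of x).
Proof.
move=> l2x; have := l2_lincomb (-1) l2x (l2_shift l2x).
by under eq_fun => k do rewrite scaleN1r addrC.
Qed.

Lemma l2_Aval x : l2 x -> l2 (Aval_of x).
Proof.
move=> l2x; have := l2_lincomb 'i (l2_add (l2_shift l2x) l2x) l2_0.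
by under eq_fun => k do rewrite addr0.
Qed.

Lemma trunc0 x : trunc 0 x = single 0 (x 0).
Proof.
apply: funext => k; rewrite /trunc /single leqn0 absz_eq0.
by case: eqP => [->|].
Qed.

Lemma truncS K x : trunc K.+1 x =
  (fun k => single K.+1%:Z (x K.+1%:Z) k + (single (- K.+1%:Z) (x (- K.+1%:Z)) k + trunc K x k)).
Proof.
apply: funext => k; rewrite /trunc /single.
have [->|kK] := eqVneq k K.+1%:Z.
  rewrite ?eqxx (_ : (K.+1%:Z == - K.+1%:Z) = false); last by lia.
  rewrite (_ : (`|K.+1%:Z| <= K)%N = false); last by lia.
  by rewrite (_ : (`|K.+1%:Z| <= K.+1)%N) ?addr0 //; lia.
have [->|kNK] := eqVneq k (- K.+1%:Z).
  rewrite (_ : (`|- K.+1%:Z| <= K)%N = false); last by lia.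
  by rewrite (_ : (`|- K.+1%:Z| <= K.+1)%N) ?addr0 ?add0r //; lia.
by rewrite !add0r; congr (if _ then _ else _); lia.
Qed.

Lemma l2_trunc K x : l2 (trunc K x).
Proof.
elim: K => [|K IH]; first by rewrite trunc0; apply: l2_single.
by rewrite truncS; apply: l2_add (l2_single _ _) (l2_add (l2_single _ _) IH).
Qed.

Lemma l2_tail x : l2 x -> forall e, 0 < e -> exists K0 : nat, forall K, (K0 <= K)%N ->
  forall L, psum (fun k => vnorm2 (x k - trunc K x k)) L <= e.
Proof.
move=> [M le_x] e e_gt0; set b := fun k => vnorm2 (x k).
have b_ge0 k : 0 <= b k by apply: vnorm2_ge0.
set E := [set y | exists K, psum b K = y]%classic.
have supE : has_sup E by split; [exists (psum b 0), 0%N | exists M => _ [K <-]].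
have [_ [K0 <-] lt_K0] := sup_adherent e_gt0 supE.
exists K0 => K K0K L.
rewrite (eq_psum (b := fun k => if (`|k| <= K)%N then 0 else b k)); last first.
  by move=> k; rewrite /trunc; case: ifP; rewrite ?subrr ?vnorm20 ?subr0.
rewrite psum_trunc; have [KL|LK] := leqP K L.
  have : psum b L <= sup E by apply: sup_upper_bound => //; exists L.
  have : psum b K0 <= psum b K := psum_nondecr b_ge0 K0K.
  lra.
by rewrite subrr ltW.
Qed.

Lemma l2inner_eventually x y c (K0 : nat) :
  (forall K, (K0 <= K)%N -> psum (fun k => vdot (x k) (y k)) K = c) -> l2inner x y = c.
Proof.
move=> ev; have lim_ev (u : nat -> R) l : (forall K, (K0 <= K)%N -> u K = l) -> limn u = l.
  by move=> ul; apply: lim_near_cst => //; exists K0 => // K /= /ul.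
rewrite /l2inner (lim_ev _ (complex.Re c)) => [|K /ev -> //].
by rewrite (lim_ev _ (complex.Im c)) => [|K /ev -> //]; case: c {ev}.
Qed.

Lemma l2inner_single_r x k w : l2inner x (single k w) = vdot (x k) w.
Proof.
apply: (l2inner_eventually (K0 := `|k|)) => K kK.
rewrite (psum_supp1 (j := k)) ?kK /single ?eqxx // => j /negPf ->.
exact: vdot0r.
Qed.

Lemma l2inner_single_l y k w : l2inner (single k w) y = vdot w (y k).
Proof.
apply: (l2inner_eventually (K0 := `|k|)) => K kK.
rewrite (psum_supp1 (j := k)) ?kK /single ?eqxx // => j /negPf ->.
exact: vdot0l.
Qed.

Lemma single_lincomb j (a : C) u w :
  single j (a *: u + w) = (fun k => a *: single j u k + single j w k).
Proof. by apply: funext => k; rewrite /single; case: ifP; rewrite ?scaler0 ?addr0. Qed.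

Lemma shift_inj (T : Type) (f g : int -> T) :
  (fun k => f (k - 1)) = (fun k => g (k - 1)) -> f = g.
Proof. by move=> fg; apply: funext => k; have := congr1 (fun h => h (k + 1)) fg; rewrite /= addrK. Qed.

Lemma single_shift j v : single (j + 1) v = (fun k => single j v (k - 1)).
Proof. by apply: funext => k; rewrite /single (_ : (k - 1 == j) = (k == j + 1)) //; lia. Qed.

Lemma Adom_Aval_recover x k : ('i + 'i) *: x k = - 'i *: Adom_of x k + Aval_of x k.
Proof. by apply/matrixP => i j; rewrite !mxE; ring. Qed.

Lemma Adom_Aval_recover_shift x k :
  ('i + 'i) *: x (k - 1) = 'i *: Adom_of x k + Aval_of x k.
Proof. by apply/matrixP => i j; rewrite !mxE; ring. Qed.

End SquareSummable.

Lemma two_i_neq0 (R : realType) : ('i + 'i : R[i]) != 0.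
Proof. by apply/eqP => /(congr1 (@complex.Im R)) /=; lra. Qed.

Section FundamentalSymmetry.
Variables (R : realType) (n : nat).
Local Notation C := R[i].
Local Notation V := 'cV[C]_n.
Variable J : (int -> V) -> int -> V.
Hypothesis J_fund : l2_fund_sym J.
Implicit Types x y f g : int -> V.

Lemma J_l2 f : l2 f -> l2 (J f).
Proof. by case: J_fund => [[J_l2 _ _] _ _]; apply: J_l2. Qed.

Lemma J_lincomb a f g : l2 f -> l2 g ->
  J (fun k => a *: f k + g k) = (fun k => a *: J f k + J g k).
Proof. by case: J_fund => [[_ J_lin _] _ _]; apply: J_lin. Qed.

Lemma J_selfadj f g : l2 f -> l2 g -> l2inner (J f) g = l2inner f (J g).
Proof. by case: J_fund => _ J_sa _; apply: J_sa. Qed.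

Lemma J_invol f : l2 f -> J (J f) = f.
Proof. by case: J_fund => _ _ JJ; apply: JJ. Qed.

Lemma J_zero : J (fun _ => 0) = (fun _ => 0).
Proof.
have := J_lincomb (-1) (@l2_0 R n) (@l2_0 R n).
have -> : (fun _ : int => -1 *: (0 : V) + 0) = (fun _ => 0).
  by apply: funext => k; rewrite scaler0 addr0.
by move=> ->; apply: funext => k; rewrite scaleN1r addNr.
Qed.

Lemma JZ a f : l2 f -> J (fun k => a *: f k) = (fun k => a *: J f k).
Proof.
move=> l2f; have := J_lincomb a l2f (@l2_0 R n); rewrite J_zero.
by under eq_fun => k do rewrite addr0; move=> ->; apply: funext => k; rewrite addr0.
Qed.

Lemma JD f g : l2 f -> l2 g -> J (fun k => f k + g k) = (fun k => J f k + J g k).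
Proof.
move=> l2f l2g; have := J_lincomb 1 l2f l2g.
by under eq_fun => k do rewrite scale1r; move=> ->; apply: funext => k; rewrite scale1r.
Qed.

Lemma block_commutes_with_S (Jm Jp : 'M[C]_n) :
  (forall x, l2 x -> forall k, J x k = if k <= 0 then Jm *m x k else Jp *m x k) ->
  commutes_with_S J.
Proof.
move=> J_block f g [x [l2x x0 -> ->]].
pose B (k : int) := if k <= 0 then Jm else Jp.
have JB y k : l2 y -> J y k = B k *m y k by move=> l2y; rewrite J_block // /B; case: ifP.
have B_shift k : B k *m x (k - 1) = B (k - 1) *m x (k - 1).
  have [->|k1] := eqVneq k 1; first by rewrite subrr x0 !mulmx0.
  by rewrite /B (_ : (k <= 0) = (k - 1 <= 0)) //; lia.
exists (Aval_of (J x)); split; last first.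
  apply: funext => k; rewrite JB; last exact: l2_Aval l2x.
  by rewrite -(scalemxAr 'i (B k)) mulmxDr B_shift -!JB.
exists (J x); split=> //; first exact: J_l2 l2x.
  by rewrite JB // x0 mulmx0.
apply: funext => k; rewrite JB; last exact: l2_Adom l2x.
by rewrite mulmxBr B_shift -!JB.
Qed.

Hypothesis J_S : commutes_with_S J.

Lemma J_vanish0_shift x : l2 x -> x 0 = 0 ->
  J x 0 = 0 /\ J (fun k => x (k - 1)) = (fun k => J x (k - 1)).
Proof.
move=> l2x x0.
have [_ [[y [_ y0 J_Adom ->]] J_Aval]] := J_S (ex_intro _ x (And4 l2x x0 erefl erefl)).
have J_recover (c : C) z w : l2 z ->
    (forall k, ('i + 'i) *: z k = c *: Adom_of x k + Aval_of x k) ->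
    (forall k, ('i + 'i) *: w k = c *: Adom_of y k + Aval_of y k) -> J z = w.
  move=> l2z ez ew; apply: funext => k; apply: (scalerI (two_i_neq0 R)).
  have := congr1 (fun h => h k) (JZ ('i + 'i) l2z).
  by rewrite (funext ez) (J_lincomb c (l2_Adom l2x) (l2_Aval l2x)) J_Adom J_Aval ew => <-.
have Jx : J x = y by apply: J_recover => // k; apply: Adom_Aval_recover.
split; first by rewrite Jx.
by rewrite Jx; apply: J_recover (l2_shift l2x) _ _ => k; apply: Adom_Aval_recover_shift.
Qed.

Lemma J_vanish0 x : l2 x -> x 0 = 0 -> J x 0 = 0.
Proof. by move=> l2x x0; case: (J_vanish0_shift l2x x0). Qed.

Lemma J_shift x : l2 x -> x 0 = 0 ->
  J (fun k => x (k - 1)) = (fun k => J x (k - 1)).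
Proof. by move=> l2x x0; case: (J_vanish0_shift l2x x0). Qed.

Lemma J_vanish1 x : l2 x -> x 1 = 0 -> J x 1 = 0.
Proof.
move=> l2x x1; pose z (k : int) := x (k + 1).
have l2z : l2 z by apply: l2_shiftN.
have z0 : z 0 = 0 by rewrite /z add0r.
have -> : x = (fun k => z (k - 1)) by apply: funext => k; rewrite /z subrK.
by rewrite J_shift // subrr J_vanish0.
Qed.

(* Self-adjointness: the k-th entry u of J (single j v) satisfies
   <u, u> = <v, J (single k u) j> = 0 for k != j. *)
Lemma J_single_local j : (forall x, l2 x -> x j = 0 -> J x j = 0) ->
  forall v, J (single j v) = single j (J (single j v) j).
Proof.
move=> J_vanish_j v; apply: funext => k; rewrite [RHS]/single.
have [->//|kj] := eqVneq k j; set u := J (single j v) k.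
have Ju_j : J (single k u) j = 0.
  by apply: J_vanish_j; [exact: l2_single | rewrite /single eq_sym (negPf kj)].
have := J_selfadj (l2_single j v) (l2_single k u).
rewrite l2inner_single_r l2inner_single_l Ju_j vdot0r => /(congr1 (@complex.Re R)).
by rewrite Re_vdotvv /= => u0; apply: vnorm2_le0; rewrite u0.
Qed.

Definition Jmx (j : int) : 'M[C]_n := colmx_of (fun v => J (single j v) j).

Lemma JmxE j v : J (single j v) j = Jmx j *m v.
Proof.
apply: (colmx_ofE (L := fun v => J (single j v) j)) => a u w.
by rewrite single_lincomb (J_lincomb _ (l2_single _ _) (l2_single _ _)).
Qed.

Definition Jblock (k : int) : 'M[C]_n := if k <= 0 then Jmx 0 else Jmx 1.

Lemma J_single_pos (m : nat) v : J (single m.+1%:Z v) = single m.+1%:Z (Jmx 1 *m v).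
Proof.
elim: m v => [|m IH] v; first by rewrite (J_single_local J_vanish1) JmxE.
rewrite (_ : m.+2%:Z = m.+1%:Z + 1); last by lia.
rewrite single_shift J_shift //; last exact: l2_single.
by rewrite IH -single_shift.
Qed.

Lemma J_single_nonpos (m : nat) v : J (single (- m%:Z) v) = single (- m%:Z) (Jmx 0 *m v).
Proof.
elim: m v => [|m IH] v; first by rewrite oppr0 (J_single_local J_vanish0) JmxE.
apply: shift_inj; rewrite -J_shift //; last exact: l2_single.
by rewrite -!single_shift (_ : - m.+1%:Z + 1 = - m%:Z) ?IH //; lia.
Qed.

Lemma J_single k v : J (single k v) = single k (Jblock k *m v).
Proof.
rewrite /Jblock; case: k => [[|m]|m].
- by rewrite lexx (J_single_nonpos 0).
- by rewrite J_single_pos.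
- by rewrite NegzE (_ : (- m.+1%:Z <= 0) = true) ?J_single_nonpos //; lia.
Qed.

Lemma J_trunc K x : J (trunc K x) = trunc K (fun k => Jblock k *m x k).
Proof.
elim: K => [|K IH]; first by rewrite !trunc0 J_single.
have l2_rest := l2_add (l2_single (- K.+1%:Z) (x (- K.+1%:Z))) (l2_trunc K x).
rewrite truncS (JD (l2_single _ _) l2_rest) (JD (l2_single _ _) (l2_trunc _ _)).
by rewrite IH !J_single truncS.
Qed.

Lemma J_block x : l2 x -> forall k, J x k = Jblock k *m x k.
Proof.
move=> l2x k; case: J_fund => [[_ _ [c J_bound]] _ _].
pose d := vnorm2 (J x k - Jblock k *m x k).
suff /vnorm2_le0 /eqP : d <= 0 by rewrite subr_eq0 => /eqP.
apply/ler_addgt0Pr => e e_gt0; rewrite add0r.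
pose a := `|c| + 1; have a_gt0 : 0 < a := ltr_wpDl (normr_ge0 c) ltr01.
have [K0 tail] := l2_tail l2x (divr_gt0 e_gt0 a_gt0).
pose K := maxn K0 `|k|; pose r i := x i - trunc K x i.
have l2r : l2 r.
  have := l2_lincomb (-1) (l2_trunc K x) l2x.
  by under eq_fun => i do rewrite scaleN1r addrC.
have Jx : J x k = Jblock k *m x k + J r k.
  rewrite {1}(_ : x = (fun i => trunc K x i + r i)); last first.
    by apply: funext => i; rewrite /r addrC subrK.
  by rewrite (JD (l2_trunc K x) l2r) J_trunc /trunc leq_maxr.
apply: (@le_trans _ _ (c * (e / a))).
  rewrite /d Jx addrC addKr.
  have J_r_ge0 i : 0 <= vnorm2 (J r i) by apply: vnorm2_ge0.
  apply: le_trans (ler_psum_term J_r_ge0 (leqnn `|k|)) _.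
  by apply: (J_bound r (e / a) l2r) => L; apply: tail; apply: leq_maxl.
have c_le_a : c <= a by rewrite (le_trans (ler_norm c)) // lerDl.
rewrite -[leRHS](divfK (lt0r_neq0 a_gt0) e) [leRHS]mulrC ler_wpM2r //.
by rewrite divr_ge0 // ltW.
Qed.

Lemma fund_sym_Jblock k : fund_sym (Jblock k).
Proof.
have J_at_k v : J (single k v) k = Jblock k *m v by rewrite J_single /single eqxx.
have Jk_selfadj u w : vdot (Jblock k *m u) w = vdot u (Jblock k *m w).
  have := J_selfadj (l2_single k u) (l2_single k w).
  by rewrite l2inner_single_r l2inner_single_l !J_at_k.
have Jk_invol (v : V) : Jblock k *m (Jblock k *m v) = v.
  have := J_invol (l2_single k v); rewrite !J_single => /(congr1 (fun h => h k)).
  by rewrite /single eqxx.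
split; apply/matrixP => a b.
  have := Jk_selfadj (delta_mx b 0) (delta_mx a 0).
  by rewrite vdot_delta_r vdot_delta_l !colmx_delta_entry !mxE => ->.
have := congr1 (fun v : V => v a 0) (Jk_invol (delta_mx b 0)).
by rewrite /= mulmxA colmx_delta_entry !mxE eqxx andbT.
Qed.

End FundamentalSymmetry.

Theorem lemma3p2 (R : realType) (n : nat) (J : (int -> 'cV[R[i]]_n) -> (int -> 'cV[R[i]]_n)) :
  l2_fund_sym J ->
  (commutes_with_S J <->
   exists Jm Jp : 'M[R[i]]_n, [/\ fund_sym Jm, fund_sym Jp &
     forall x, l2 x -> forall k : int,
       J x k = if k <= 0 then Jm *m x k else Jp *m x k]).
Proof.
move=> J_fund; split=> [J_S|[Jm [Jp [_ _ J_blockE]]]].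
  exists (Jmx J 0), (Jmx J 1); split.
  - exact: (fund_sym_Jblock J_fund J_S 0).
  - exact: (fund_sym_Jblock J_fund J_S 1).
  - by move=> x l2x k; rewrite (J_block J_fund J_S l2x) /Jblock; case: ifP.
exact: (@block_commutes_with_S _ _ _ J_fund Jm Jp J_blockE).
Qed.
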